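(* Let $\phi\in\,]0,\pi[$, $M\in\mathbb{R}$, $N>0$. Let $\Sigma$ be the Keplerian branch around ${\rm O}$ in the plane ${\rm O}xy$ with equation $r=My+N$. Consider the affine map $(x_1,y_1)\mapsto(x_3,y_3)$ defined by $x_1=x_3-M\frac{\cos\phi}{\sin\phi}y_3-N\cos\phi$, $y_1=\frac{1}{\sin\phi}y_3$. Then the image of $\Sigma$ by this map is the Keplerian branch around ${\rm O}$ with equation $r=x\cos\phi+yM\sin\phi+N\sin^2\phi$.
   Context: In the Euclidean plane ${\rm O}xy$, $r=\sqrt{x^2+y^2}$. A Keplerian branch around ${\rm O}$ is the image of a solution of Newton's system $\ddot q=-q/\|q\|^3$ (extended through collisions by bouncing back along the same ray with the same energy). For $\gamma>0$, the set of points satisfying $r=\alpha x+\beta y+\gamma$ is an (irreducible) Keplerian branch around ${\rm O}$, and every nonrectilinear Keplerian branch is of this form. *)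

From Stdlib Require Import Reals.
Open Scope R_scope.

Definition rad (p : R * R) : R := sqrt (fst p ^ 2 + snd p ^ 2).

Definition kepler_curve (a b c : R) (p : R * R) : Prop :=
  rad p = a * fst p + b * snd p + c.

Definition lemma6_map_rel (phi M N : R) (p1 p3 : R * R) : Prop :=
  fst p1 = fst p3 - M * (cos phi / sin phi) * snd p3 - N * cos phi /\
  snd p1 = snd p3 / sin phi.

(* Writing L = M y1 + N for the right-hand side of the equation of Sigma, the map sends
   (x1, y1) to (x1 + L cos phi, y1 sin phi).  Using cos^2 + sin^2 = 1, the new right-hand
   side becomes x1 cos phi + L, and x3^2 + y3^2 - (x1 cos phi + L)^2 = sin^2 phi (x1^2 + y1^2 - L^2),
   so the squared equations are equivalent.  The sign conditions L >= 0 and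
   x1 cos phi + L >= 0 agree because |x1| <= |L| on both curves and |cos phi| < 1. *)
From Stdlib Require Import Reals Lra Psatz.
Open Scope R_scope.

Lemma kepler_curve_iff (a b c x y : R) :
  kepler_curve a b c (x, y) <->
  0 <= a * x + b * y + c /\ x ^ 2 + y ^ 2 = (a * x + b * y + c) ^ 2.
Proof.
  unfold kepler_curve, rad; cbn [fst snd]; split.
  - intros <-; split; [apply sqrt_pos |].
    rewrite pow2_sqrt; [reflexivity | nra].
  - intros [Hpos ->]; exact (sqrt_pow2 _ Hpos).
Qed.

Lemma Rle_0_add_contraction_iff (c x L : R) :
  c * c < 1 -> x * x <= L * L -> 0 <= L <-> 0 <= c * x + L.
Proof.
  intros Hc Hx.
  destruct (Req_dec L 0) as [-> | HL].
  - assert (x = 0) as -> by nra; lra.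
  - assert (Hlt : (c * x) * (c * x) < L * L).
    { assert (0 < L * L) by nra. nra. }
    split; intro; nra.
Qed.

Section Shear.

Variables (c s M N : R).
Hypothesis Hcs : c ^ 2 + s ^ 2 = 1.

Let Hs2 : s ^ 2 = 1 - c ^ 2.
Proof. lra. Qed.

Lemma shear_rhs (x1 y1 : R) :
  c * (x1 + c * (M * y1 + N)) + M * s * (s * y1) + N * s ^ 2 = c * x1 + (M * y1 + N).
Proof.
  replace (M * s * (s * y1)) with (M * y1 * s ^ 2) by ring.
  rewrite Hs2; ring.
Qed.

Lemma shear_norm2 (x1 y1 L : R) :
  (x1 + c * L) ^ 2 + (s * y1) ^ 2 - (c * x1 + L) ^ 2 = s ^ 2 * (x1 ^ 2 + y1 ^ 2 - L ^ 2).
Proof. replace ((s * y1) ^ 2) with (s ^ 2 * y1 ^ 2) by ring; rewrite Hs2; ring. Qed.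

Lemma kepler_curve_shear (x1 y1 : R) : s <> 0 ->
  kepler_curve 0 M N (x1, y1) <->
  kepler_curve c (M * s) (N * s ^ 2) (x1 + c * (M * y1 + N), s * y1).
Proof.
  intro Hs.
  rewrite !kepler_curve_iff.
  replace (0 * x1 + M * y1 + N) with (M * y1 + N) by ring.
  replace (c * (x1 + c * (M * y1 + N)) + M * s * (s * y1) + N * s ^ 2)
    with (c * x1 + (M * y1 + N)) by (rewrite <- shear_rhs; ring).
  set (L := M * y1 + N).
  pose proof (shear_norm2 x1 y1 L) as Hnorm.
  assert (Hs2pos : 0 < s ^ 2) by nra.
  assert (Hc : c * c < 1) by nra.
  assert (Hsq : x1 ^ 2 + y1 ^ 2 = L ^ 2 <->
                (x1 + c * L) ^ 2 + (s * y1) ^ 2 = (c * x1 + L) ^ 2).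
  { split; intro E; rewrite E in Hnorm; nra. }
  rewrite <- Hsq.
  assert (Hsign : x1 ^ 2 + y1 ^ 2 = L ^ 2 -> 0 <= L <-> 0 <= c * x1 + L).
  { intro E; apply Rle_0_add_contraction_iff; [exact Hc | nra]. }
  tauto.
Qed.

End Shear.

Lemma lemma6_map_relE (phi M N : R) (p1 p3 : R * R) : sin phi <> 0 ->
  lemma6_map_rel phi M N p1 p3 <->
  p3 = (fst p1 + cos phi * (M * snd p1 + N), sin phi * snd p1).
Proof.
  destruct p1 as [x1 y1], p3 as [x3 y3]; unfold lemma6_map_rel; simpl; intro Hs.
  split.
  - intros [-> ->]; f_equal; field; exact Hs.
  - intros [= -> ->]; split; field; exact Hs.
Qed.

Theorem lemma6 (phi M N : R) (hphi0 : 0 < phi) (hphi1 : phi < PI) (hN : 0 < N) :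
  forall p3 : R * R,
    (exists p1 : R * R, kepler_curve 0 M N p1 /\ lemma6_map_rel phi M N p1 p3)
    <-> kepler_curve (cos phi) (M * sin phi) (N * (sin phi) ^ 2) p3.
Proof.
  intro p3.
  assert (Hs : sin phi <> 0) by (apply Rgt_not_eq, sin_gt_0; assumption).
  assert (Hcs : cos phi ^ 2 + sin phi ^ 2 = 1).
  { rewrite <- (sin2_cos2 phi); unfold Rsqr; ring. }
  split.
  - intros [[x1 y1] [H1 Hmap]].
    apply lemma6_map_relE in Hmap as ->; [| exact Hs].
    apply kepler_curve_shear; assumption.
  - destruct p3 as [x3 y3]; intro H3.
    set (p1 := (x3 - M * (cos phi / sin phi) * y3 - N * cos phi, y3 / sin phi)).
    assert (Hmap : lemma6_map_rel phi M N p1 (x3, y3)) by (split; reflexivity).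
    exists p1; split; [| exact Hmap].
    apply lemma6_map_relE in Hmap; [| exact Hs].
    rewrite Hmap in H3; destruct p1 as [x1 y1].
    apply kepler_curve_shear in H3; assumption.
Qed.
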